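(* Let $L\in\mathbb R^{N\times N}$ be symmetric positive semidefinite with eigenvalues $\lambda_1\le\cdots\le\lambda_N$ and orthonormal eigenvectors $u_1,\dots,u_N$. Let $P\in\mathbb R^{n\times N}$ have full row rank, $P^+$ its Moore–Penrose pseudoinverse, $\Pi=P^+P$, $\Pi^\perp = I-\Pi$, and $L_c = (P^+)^\top LP^+$. Let $i$ be an index with $\lambda_i>0$ and $\mathbf U_i=\mathrm{span}(u_1,\dots,u_i)$. If $L$ and $L_c$ are $(\mathbf U_i,\epsilon_i)$-similar, then $\|\Pi^\perp u_i\|_2^2\le\epsilon_i$.
   Context: For PSD $M$, $\|y\|_M=\sqrt{y^\top My}$. $L_c$ and $L$ are $(\mathbf R,\epsilon)$-similar if $\epsilon\ge0$ and $\|x-P^+Px\|_L\le\epsilon\|x\|_L$ for all $x\in\mathbf R$. *)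

From HB Require Import structures.
From mathcomp Require Import all_boot all_order all_algebra.
Set Implicit Arguments. Unset Strict Implicit. Unset Printing Implicit Defensive.
Import Order.TTheory GRing.Theory Num.Theory.
Local Open Scope ring_scope.

Definition qform (R : rcfType) (N : nat) (M : 'M[R]_N) (y : 'cV[R]_N) : R :=
  ((y^T *m M *m y) 0 0).

Definition mnorm (R : rcfType) (N : nat) (M : 'M[R]_N) (y : 'cV[R]_N) : R :=
  Num.sqrt (qform M y).

Definition norm2 (R : rcfType) (N : nat) (y : 'cV[R]_N) : R :=
  Num.sqrt ((y^T *m y) 0 0).

(* Pp is the Moore-Penrose pseudoinverse of P (the four Penrose conditions). *)
Definition is_pinv (R : rcfType) (n N : nat) (P : 'M[R]_(n, N)) (Pp : 'M[R]_(N, n)) : Prop :=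
  [/\ P *m Pp *m P = P, Pp *m P *m Pp = Pp,
      (P *m Pp)^T = P *m Pp & (Pp *m P)^T = Pp *m P].

Definition coarse_L (R : rcfType) (n N : nat) (L : 'M[R]_N) (Pp : 'M[R]_(N, n)) : 'M[R]_n :=
  Pp^T *m L *m Pp.

Definition Usimilar (R : rcfType) (n N : nat) (L : 'M[R]_N) (P : 'M[R]_(n, N))
  (Pp : 'M[R]_(N, n)) (U : 'cV[R]_N -> Prop) (eps : R) : Prop :=
  0 <= eps /\ forall x, U x -> mnorm L (x - Pp *m P *m x) <= eps * mnorm L x.

(* span(u_0, ..., u_i) (0-based indices) *)
Definition span_upto (R : rcfType) (N : nat) (u : 'I_N -> 'cV[R]_N) (i : 'I_N)
  (x : 'cV[R]_N) : Prop :=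
  exists c : 'I_N -> R, x = \sum_(j < N | (j <= i)%N) c j *: u j.

(** Write [Π⊥ = I - P^+ P] and [w = Π⊥ u_i].  Since [Π⊥] is a symmetric
    idempotent, [c := u_i^T w = ‖w‖₂²].  Because [u_i] is a unit
    eigenvector of the positive semidefinite [L], expanding
    [0 <= ‖c u_i - w‖_L²] gives [λ_i c² <= ‖w‖_L²], while similarity on
    [u_i ∈ U_i] gives [‖w‖_L² <= ε² ‖u_i‖_L² = ε² λ_i].  Dividing by
    [λ_i > 0] yields [c² <= ε²], i.e. [c <= ε]. *)
From HB Require Import structures.
From mathcomp Require Import all_boot all_order all_algebra.
From mathcomp Require Import ring lra.
Import Order.TTheory GRing.Theory Num.Theory.
Local Open Scope ring_scope.

Section Dot.
Context {R : rcfType} {N : nat}.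
Implicit Types (x y : 'cV[R]_N).

Lemma dotmx_self_ge0 x : 0 <= (x^T *m x) 0 0.
Proof.
by rewrite mxE; apply: sumr_ge0 => k _; rewrite mxE -expr2 sqr_ge0.
Qed.

Lemma qform_scale_sub (L : 'M[R]_N) (c : R) x y :
  L^T = L ->
  qform L (c *: x - y)
    = c ^+ 2 * qform L x - 2 * c * (x^T *m L *m y) 0 0 + qform L y.
Proof.
move=> LT; have tr : (y^T *m L *m x)^T = x^T *m L *m y.
  by rewrite !trmx_mul trmxK LT mulmxA.
have eT : (c *: x - y)^T = c *: x^T - y^T by rewrite linearB linearZ.
rewrite /qform eT !mulmxBl !mulmxBr -!scalemxAl -!scalemxAr.
rewrite -tr; move: (y^T *m L *m x) (x^T *m L *m x) (y^T *m L *m y) => A B C.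
rewrite !mxE; ring.
Qed.

End Dot.

Section UnitEigenvector.
Context {R : rcfType} {N : nat} {L : 'M[R]_N} {l : R} {v : 'cV[R]_N}.
Hypotheses (LT : L^T = L) (Lv : L *m v = l *: v) (v_unit : (v^T *m v) 0 0 = 1).

Lemma qform_unit_eigen : qform L v = l.
Proof. by rewrite /qform -mulmxA Lv -scalemxAr mxE v_unit mulr1. Qed.

(* The cross term of [‖c v - w‖_L²] collapses because [v^T L = l v^T];
   taking [c = v^T w] is the Cauchy-Schwarz step for the semi-inner
   product [x^T L y]. *)
Lemma eigen_dot_sqr_le_qform (w : 'cV[R]_N) :
  (forall x, 0 <= qform L x) -> l * (v^T *m w) 0 0 ^+ 2 <= qform L w.
Proof.
move=> Lpsd; set c := (v^T *m w) 0 0.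
have vLw : (v^T *m L *m w) 0 0 = l * c.
  have vL : v^T *m L = l *: v^T by rewrite -{1}LT -trmx_mul Lv linearZ.
  by rewrite vL -scalemxAl mxE.
have := Lpsd (c *: v - w).
rewrite qform_scale_sub // qform_unit_eigen vLw => H; lra.
Qed.

End UnitEigenvector.

Section PseudoinverseComplement.
Context {R : rcfType} {n N : nat} {P : 'M[R]_(n, N)} {Pp : 'M[R]_(N, n)}.
Hypothesis Pp_pinv : is_pinv P Pp.

Local Notation Q := (1%:M - Pp *m P).

Lemma pinv_coproj_sym : Q^T = Q.
Proof. by case: Pp_pinv => _ _ _ h; rewrite linearB /= trmx1 h. Qed.

Lemma pinv_coproj_idem : Q *m Q = Q.
Proof.
case: Pp_pinv => _ h _ _.
by rewrite mulmxBl !mulmxBr !mul1mx !mulmx1 !mulmxA h subrr subr0.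
Qed.

Lemma pinv_coproj_sqnorm (x : 'cV[R]_N) :
  ((Q *m x)^T *m (Q *m x)) 0 0 = (x^T *m (Q *m x)) 0 0.
Proof.
by rewrite trmx_mul pinv_coproj_sym -mulmxA (mulmxA Q) pinv_coproj_idem.
Qed.

End PseudoinverseComplement.

Lemma span_upto_self {R : rcfType} {N : nat} (u : 'I_N -> 'cV[R]_N) (i : 'I_N) :
  span_upto u i (u i).
Proof.
exists (fun j => (j == i)%:R).
rewrite (bigD1 i) //= eqxx scale1r big1 ?addr0 // => j /andP [_ /negbTE ->].
by rewrite scale0r.
Qed.

Lemma sqrt_le_mul_sqrt {R : rcfType} (a b e : R) :
  0 <= a -> 0 <= b -> 0 <= e ->
  Num.sqrt a <= e * Num.sqrt b -> a <= e ^+ 2 * b.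
Proof.
move=> a0 b0 e0 H.
have := lerXn2r 2 (sqrtr_ge0 a : _ \is Num.nneg) _ H.
by rewrite exprMn !sqr_sqrtr //; apply; rewrite nnegrE mulr_ge0 ?sqrtr_ge0.
Qed.

Theorem lemma2 (R : rcfType) (n N : nat)
  (L : 'M[R]_N) (lambda : 'I_N -> R) (u : 'I_N -> 'cV[R]_N)
  (P : 'M[R]_(n, N)) (Pp : 'M[R]_(N, n)) (i : 'I_N) (eps : R) :
  L^T = L ->
  (forall x : 'cV[R]_N, 0 <= qform L x) ->
  (forall j k : 'I_N, (j <= k)%N -> lambda j <= lambda k) ->
  (forall j k : 'I_N, ((u j)^T *m u k) 0 0 = (j == k)%:R) ->
  (forall j : 'I_N, L *m u j = lambda j *: u j) ->
  row_free P ->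
  is_pinv P Pp ->
  0 < lambda i ->
  Usimilar L P Pp (span_upto u i) eps ->
  norm2 ((1%:M - Pp *m P) *m u i) ^+ 2 <= eps.
Proof.
move=> LT Lpsd _ u_on Leig _ Pp_pinv l_gt0 [eps_ge0 sim].
have u_unit : ((u i)^T *m u i) 0 0 = 1 by rewrite u_on eqxx.
set w := (1%:M - Pp *m P) *m u i; set c := ((u i)^T *m w) 0 0.
have ww : (w^T *m w) 0 0 = c by rewrite (pinv_coproj_sqnorm Pp_pinv).
have c_ge0 : 0 <= c by rewrite -ww dotmx_self_ge0.
have lower : lambda i * c ^+ 2 <= qform L w
  := eigen_dot_sqr_le_qform LT (Leig i) u_unit w Lpsd.
have upper : qform L w <= eps ^+ 2 * lambda i.
  have := sim _ (span_upto_self u i).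
  rewrite /mnorm (qform_unit_eigen (Leig i) u_unit) /w mulmxBl mul1mx.
  by apply: sqrt_le_mul_sqrt => //; exact: ltW.
have : c ^+ 2 <= eps ^+ 2.
  by rewrite -(ler_pM2l l_gt0) [_ * eps ^+ 2]mulrC; apply: le_trans upper.
by rewrite /norm2 -/w ww sqr_sqrtr // ler_pXn2r ?nnegrE.
Qed.
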